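(* Let $G$ be a graph of order $p$ with $1\le\delta(G)\le p-2$. If $G$ has a $\delta$-sequence $\{\mathcal G_i\}_{i=1}^s$ such that $\tilde z_i(G)=\sum_{j=2}^i\tilde y_j(G)\ge 0$ for all $2\le i\le s$, then $str(G)=p+\delta(G)$.
   Context: All graphs are finite, simple and loopless. For a graph $G$ of order $p$, a numbering of $G$ is a bijection $f:V(G)\to[1,p]$, where $[a,b]$ denotes the set of integers from $a$ to $b$. The strength of a numbering $f$ is $str_f(G)=\max\{f(u)+f(v): uv\in E(G)\}$, and the strength of a graph $G$ with at least one edge is $str(G)=\min\{str_f(G): f \text{ a numbering of } G\}$. $\delta(G)$ denotes the minimum degree. $G+H$ denotes disjoint union, $mK_1$ the edgeless graph on $m$ vertices, $K_r$ the complete graph. $\delta$-sequence: Let $G$ have order $p$ with $1\le\delta(G)\le p-2$. Set $\mathcal G_1=G_1=G$, $m_1=0$. For each $i$, write $\mathcal G_i=m_iK_1+G_i$, where $m_i\ge0$ is the number of isolated vertices of $\mathcal G_i$ and $G_i$ has no isolated vertices; put $\delta_i=\delta(G_i)$. If $\mathcal G_i$ is neither of the form $mK_1$ ($m\ge1$) nor $mK_1+K_r$ ($m\ge0$, $r\ge2$), choose a vertex $u_i$ of $G_i$ with $\deg_{G_i}(u_i)=\delta_i$ and let $\mathcal G_{i+1}$ be obtained from $G_i$ by deleting $u_i$ together with all its neighbours in $G_i$ (equivalently, from $\mathcal G_i$ by deleting its $m_i$ isolated vertices, $u_i$ and $N_{G_i}(u_i)$). Stop at the first index $s$ ($s\ge2$)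 for which $\mathcal G_s$ is $m_sK_1$ with $m_s\ge1$ (then set $\delta_s=0$) or $m_sK_1+K_r$ with $m_s\ge0$, $r\ge2$ (then $\delta_s=r-1$). The resulting $\{\mathcal G_i\}_{i=1}^s$ is a $\delta$-sequence of $G$. Define $\tilde y_j(G)=m_j+1-\delta_j$ for $1\le j\le s$ and $\tilde z_i(G)=\sum_{j=2}^i\tilde y_j(G)$. *)

(* A simple graph is a symmetric irreflexive relation e on a finType T. *)
From mathcomp Require Import all_boot all_order all_algebra.
Set Implicit Arguments. Unset Strict Implicit. Unset Printing Implicit Defensive.

Section Defs.
Variables (T : finType) (e : rel T).

Definition degin (A : {set T}) (v : T) : nat := #|[set u in A | e v u]|.

Definition min_deg_on (A : {set T}) : nat :=
  if A == set0 then 0 else \big[minn/#|T|]_(v in A) degin A v.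

Definition min_deg : nat := min_deg_on [set: T].

Definition isol (S : {set T}) : {set T} := [set v in S | degin S v == 0].
Definition nonisol (S : {set T}) : {set T} := [set v in S | degin S v != 0].

Definition m_of (S : {set T}) : nat := #|isol S|.

Definition is_complete_on (A : {set T}) : Prop :=
  forall u v, u \in A -> v \in A -> u != v -> e u v.

(* induced graph on S is m K_1 with m >= 1 *)
Definition term_empty (S : {set T}) : Prop := S != set0 /\ nonisol S = set0.
(* induced graph on S is m K_1 + K_r with r >= 2 *)
Definition term_complete (S : {set T}) : Prop :=
  2 <= #|nonisol S| /\ is_complete_on (nonisol S).
Definition terminal (S : {set T}) : Prop := term_empty S \/ term_complete S.

(* closed neighbourhood of u in G_i = nonisol S *)
Definition closed_nbhd (S : {set T}) (u : T) : {set T} :=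
  u |: [set w in nonisol S | e u w].

(* A delta-sequence: vertex sets S 1, ..., S s (script G_i is the graph
   induced on S i). *)
Definition delta_seq (Sq : nat -> {set T}) (s : nat) : Prop :=
  [/\ 2 <= s, Sq 1 = [set: T],
      (forall i, 1 <= i < s ->
         ~ terminal (Sq i) /\
         exists2 u, u \in nonisol (Sq i) &
           degin (nonisol (Sq i)) u = min_deg_on (nonisol (Sq i)) /\
           Sq i.+1 = nonisol (Sq i) :\: closed_nbhd (Sq i) u)
    & terminal (Sq s)].

(* delta_i along the sequence, following the paper's convention at i = s *)
Definition delta_i (Sq : nat -> {set T}) (s i : nat) : nat :=
  if i == s then
    (if nonisol (Sq s) == set0 then 0 else #|nonisol (Sq s)| - 1)
  else min_deg_on (nonisol (Sq i)).

Definition y_tilde (Sq : nat -> {set T}) (s j : nat) : int :=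
  ((m_of (Sq j))%:Z + 1 - (delta_i Sq s j)%:Z)%R.

Definition z_tilde (Sq : nat -> {set T}) (s i : nat) : int :=
  (\sum_(2 <= j < i.+1) y_tilde Sq s j)%R.

Definition numbering (f : T -> nat) : Prop :=
  injective f /\ forall x, 1 <= f x <= #|T|.

Definition str_f (f : T -> nat) : nat :=
  \max_(u : T) \max_(v : T | e u v) (f u + f v).

Definition is_strength (k : nat) : Prop :=
  (exists f, numbering f /\ str_f f = k) /\
  (forall f, numbering f -> k <= str_f f).

End Defs.

From mathcomp Require Import all_boot all_order all_algebra zify.

(* Lower bound (any graph with delta(G) >= 1): the vertex labelled p has at
   least delta(G) neighbours, so one of them is labelled at least delta(G).

   Upper bound.  Let S_1 = V, ..., S_s be the vertex sets of the sequence with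
   centres u_i.  Every vertex x has a stage (the last i with x in S_i) and a
   role there: isolated in S_i (role 2), the centre u_i (role 1), or a
   neighbour of u_i in G_i (role 0).  Stage k contains m_k vertices of role 2,
   delta_k of role 0 and one centre, so among stages 1..i the vertices of
   nonzero role outnumber those of role 0 by ~y_1 + ~z_i = 1 - delta(G) + ~z_i.
   A vertex of nonzero role is adjacent only to role-0 vertices of earlier
   stages, or of its own stage when it is a centre.  Labelling role-0 vertices
   first by increasing stage, then the others by decreasing stage, the surplus
   inequality bounds every edge sum by p + delta(G). *)

Set Implicit Arguments. Unset Strict Implicit. Unset Printing Implicit Defensive.

Section GraphFacts.
Variables (T : finType) (e : rel T).

Lemma min_deg_le_degin v : min_deg e <= degin e [set: T] v.
Proof.
rewrite /min_deg /min_deg_on; case: ifP => // _.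
have := @Order.TotalTheory.bigmin_le_cond _ nat _ #|T| v _ (degin e [set: T]) (in_setT v).
by rewrite minEnat.
Qed.

Lemma degin0P (A : {set T}) x y : degin e A x = 0 -> y \in A -> ~~ e x y.
Proof.
move=> /eqP; rewrite cards_eq0 => /eqP nbrs0 yA; apply/negP => exy.
have : y \in [set w in A | e x w] by rewrite inE yA exy.
by rewrite nbrs0 inE.
Qed.

Lemma adj_nonisol (A : {set T}) x y : x \in A -> y \in A -> e x y -> x \in nonisol e A.
Proof. by move=> xA yA exy; rewrite inE xA; apply/eqP => /degin0P/(_ yA); rewrite exy. Qed.

Lemma nonisol_sub (A : {set T}) : nonisol e A \subset A.
Proof. by apply/subsetP => x; rewrite inE => /andP[]. Qed.

Lemma isol_nonisol (A : {set T}) x : x \in A -> (x \in isol e A) = (x \notin nonisol e A).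
Proof. by move=> xA; rewrite !inE xA /=; case: eqP. Qed.

Lemma nonisol_not_isol (A : {set T}) x : x \in nonisol e A -> x \notin isol e A.
Proof. by move=> xA; rewrite isol_nonisol ?xA // (subsetP (nonisol_sub A)). Qed.

Lemma nonisol_full : 1 <= min_deg e -> nonisol e [set: T] = [set: T].
Proof.
by move=> d1; apply/setP => v; rewrite !inE -lt0n (leq_trans d1 (min_deg_le_degin v)).
Qed.

Lemma isol_full : 1 <= min_deg e -> isol e [set: T] = set0.
Proof.
move=> d1; apply/setP => v; rewrite !inE; apply/negbTE.
by rewrite -lt0n (leq_trans d1 (min_deg_le_degin v)).
Qed.

Lemma card_gt0_min_deg : 1 <= min_deg e -> 0 < #|T|.
Proof.
rewrite /min_deg /min_deg_on; case: eqP => // T_nonempty _.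
by rewrite -cardsT card_gt0; apply/eqP.
Qed.

Lemma exists_large_label (A : {set T}) (g : T -> nat) :
  injective g -> (forall x, 0 < g x) -> 0 < #|A| -> exists2 a, a \in A & #|A| <= g a.
Proof.
move=> g_inj g_pos A_gt0.
have [/exists_inP [a Aa ga]|/exists_inPn small] := boolP [exists a in A, #|A| <= g a].
  by exists a.
have labels_sub : {subset map g (enum A) <= iota 1 #|A|.-1}.
  move=> z /mapP [a]; rewrite mem_enum => Aa ->; rewrite mem_iota g_pos /=.
  by have := small a Aa; rewrite -ltnNge; lia.
have := uniq_leq_size _ labels_sub.
by rewrite map_inj_uniq ?enum_uniq // size_map size_iota -cardE => /(_ isT); lia.
Qed.

(* The easy half of the theorem: str(G) >= p + delta(G).  The vertex labelled p
   has at least delta(G) neighbours, one of which carries a label >= delta(G). *)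
Lemma strength_lower_bound f :
  1 <= min_deg e -> numbering f -> #|T| + min_deg e <= str_f e f.
Proof.
move=> d1 [f_inj f_range].
have f_pos x : 0 < f x by case/andP: (f_range x).
have T_gt0 : 0 < #|[set: T]| by rewrite cardsT card_gt0_min_deg.
have [v _ fv] := exists_large_label f_inj f_pos T_gt0.
have deg_v := min_deg_le_degin v.
have [w ew fw] := exists_large_label (A := [set w in [set: T] | e v w]) f_inj f_pos
  (ltac:(by move: deg_v; rewrite /degin; lia)).
apply: (bigmax_sup v) => //; apply: (bigmax_sup w); first by move: ew; rewrite !inE.
by move: fv fw deg_v; rewrite cardsT /degin; lia.
Qed.

End GraphFacts.

Section RankNumbering.
Variables (T : finType) (K : T -> nat).

(* Labelling vertices 1..p in increasing order of the weight K (ties broken by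
   enum_rank) gives a numbering in which heavier vertices get larger labels. *)
Definition rank_key x := K x * #|T| + enum_rank x.
Definition rank_num x := #|[set y | rank_key y <= rank_key x]|.

Lemma rank_key_lt x y : K x < K y -> rank_key x < rank_key y.
Proof.
move=> Kxy; rewrite /rank_key.
have := ltn_ord (enum_rank x); have := ltn_ord (enum_rank y).
move: (nat_of_ord (enum_rank x)) (nat_of_ord (enum_rank y)) => a b ha hb.
have : K x * #|T| + a < (K x).+1 * #|T| by rewrite mulSn addnC ltn_add2r.
have : (K x).+1 * #|T| <= K y * #|T| by rewrite leq_mul2r Kxy orbT.
lia.
Qed.

Lemma rank_key_inj : injective rank_key.
Proof.
move=> x y eq_key; apply: enum_rank_inj; apply: val_inj.
have : rank_key x %% #|T| = rank_key y %% #|T| by rewrite eq_key.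
by rewrite /rank_key !modnMDl !modn_small.
Qed.

Lemma rank_num_numbering : numbering rank_num.
Proof.
split=> [x y|x]; last by rewrite max_card andbT; apply/card_gt0P; exists x; rewrite inE.
have mono a b : rank_key a < rank_key b -> rank_num a < rank_num b.
  move=> ab; apply: proper_card; apply/properP; split.
    by apply/subsetP => z; rewrite !inE => /leq_trans/(_ (ltnW ab)).
  by exists b; rewrite !inE // -ltnNge.
move=> fxy; apply: rank_key_inj.
by case: (ltngtP (rank_key x) (rank_key y)) => // /mono; rewrite fxy ltnn.
Qed.

Lemma rank_num_le x : rank_num x <= #|[set y | K y <= K x]|.
Proof.
apply/subset_leq_card/subsetP => y; rewrite !inE => yx.
by rewrite leqNgt; apply/negP => /rank_key_lt; rewrite ltnNge yx.
Qed.

Lemma rank_num_above x (B : {set T}) :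
  B \subset [set y | K x < K y] -> rank_num x + #|B| <= #|T|.
Proof.
move=> heavy; rewrite -cardsUI.
suff -> : [set y | rank_key y <= rank_key x] :&: B = set0 by rewrite cards0 addn0 max_card.
apply/setP => y; rewrite !inE; apply/negP => /andP[yx By].
by move: (subsetP heavy _ By); rewrite inE => /rank_key_lt; rewrite ltnNge yx.
Qed.

End RankNumbering.

Section CentreChoice.
Variables (T : finType) (e : rel T) (Gs : nat -> {set T}) (s : nat).

Definition centre_ok i v :=
  (v \in nonisol e (Gs i)) &&
  ((i < s) ==> (degin e (nonisol e (Gs i)) v == min_deg_on e (nonisol e (Gs i)))
               && (Gs i.+1 == nonisol e (Gs i) :\: closed_nbhd e (Gs i) v)).

Definition centre (x0 : T) i := odflt x0 [pick v | centre_ok i v].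

Lemma centre_step x0 : delta_seq e Gs s -> forall i, 1 <= i < s ->
  [/\ centre x0 i \in nonisol e (Gs i),
      degin e (nonisol e (Gs i)) (centre x0 i) = min_deg_on e (nonisol e (Gs i)) &
      Gs i.+1 = nonisol e (Gs i) :\: closed_nbhd e (Gs i) (centre x0 i)].
Proof.
move=> [_ _ steps _] i /[dup] /andP[_ lt_is] /steps [_ [v v_non [v_deg v_next]]].
rewrite /centre; case: pickP => [w|none]; last first.
  by move: (none v); rewrite /centre_ok v_non lt_is v_deg v_next !eqxx.
by rewrite /centre_ok lt_is => /and3P[? /eqP ? /eqP ?].
Qed.

Lemma centre_last x0 : nonisol e (Gs s) != set0 -> centre x0 s \in nonisol e (Gs s).
Proof.
case/set0Pn => v v_non; rewrite /centre; case: pickP => [w /andP[] //|none].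
by move: (none v); rewrite /centre_ok v_non ltnn.
Qed.

End CentreChoice.

Section DeltaSequence.
Variables (T : finType) (e : rel T) (s : nat) (S : nat -> {set T}) (u : nat -> T).
Hypotheses (e_sym : symmetric e) (e_irr : irreflexive e).
Hypotheses (s_ge2 : 2 <= s) (S1 : S 1 = [set: T]).
Hypothesis step : forall i, 1 <= i < s ->
  [/\ u i \in nonisol e (S i),
      degin e (nonisol e (S i)) (u i) = min_deg_on e (nonisol e (S i)) &
      S i.+1 = nonisol e (S i) :\: closed_nbhd e (S i) (u i)].
Hypothesis last_centre : nonisol e (S s) != set0 -> u s \in nonisol e (S s).
(* S 1, ..., S s are the vertex sets of a delta-sequence of G with centres
   u 1, ..., u (s-1); u s is any vertex of the final clique (if there is one). *)

Lemma next_sub_nonisol k : 1 <= k < s -> S k.+1 \subset nonisol e (S k).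
Proof. by move=> /step[_ _ ->]; apply: subsetDl. Qed.

Lemma S_nested i j : 1 <= i -> i <= j <= s -> S j \subset S i.
Proof.
move=> i1; elim: j => [|j IH] /andP[ij js]; first by lia.
have [-> | lt_ij] := eqVneq i j.+1; first exact: subxx.
apply: subset_trans (IH _); last by lia.
by apply: subset_trans (next_sub_nonisol _) (nonisol_sub _ _); lia.
Qed.

Definition stage x := \max_(i < s.+1 | x \in S i) (i : nat).

Lemma stage_max x i : i <= s -> x \in S i -> i <= stage x.
Proof. by move=> i_le xS; apply: (@leq_bigmax_cond _ _ _ (Ordinal (i_le : i < s.+1))). Qed.

Lemma stage_le x : stage x <= s.
Proof. by apply/bigmax_leqP => i _; rewrite -ltnS. Qed.

Lemma stage_in x : x \in S (stage x).
Proof.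
have x_S1 : x \in S (@inord s 1) by rewrite inordK ?S1 ?inE //; lia.
rewrite /stage (bigmax_eq_arg (inord 1) x_S1).
by case: arg_maxnP.
Qed.

Lemma stage_ge1 x : 1 <= stage x.
Proof. by apply: stage_max; [lia | rewrite S1 inE]. Qed.

Lemma in_earlier_S x i : 1 <= i <= stage x -> x \in S i.
Proof.
by case/andP=> i1 i_le; apply: (subsetP (S_nested i1 _)) (stage_in x); rewrite i_le stage_le.
Qed.

Lemma stageE x k : 1 <= k <= s -> x \in S k -> (k < s -> x \notin S k.+1) -> stage x = k.
Proof.
case/andP=> k1 ks xS not_next; apply/eqP; rewrite eqn_leq stage_max // andbT.
rewrite leqNgt; apply/negP => lt_k.
have lt_ks : k < s by have := stage_le x; lia.
by move: (not_next lt_ks); rewrite in_earlier_S //; lia.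
Qed.

Lemma stage_last x : x \in S s -> stage x = s.
Proof. by move=> xS; apply: stageE => //; [lia | rewrite ltnn]. Qed.

Lemma centre_no_later_nbr k y : 1 <= k < s -> y \in S k.+1 -> ~~ e (u k) y.
Proof.
move=> /step[_ _ ->]; rewrite inE /closed_nbhd in_setU1 inE => /andP[+ y_non].
by rewrite y_non; apply: contra => ->; rewrite orbT.
Qed.

Lemma centre_stage k : 1 <= k <= s -> u k \in nonisol e (S k) -> stage (u k) = k.
Proof.
move=> k_range uS; apply: stageE => //; first exact: (subsetP (nonisol_sub _ _) _ uS).
move=> lt_ks; have /step[_ _ ->] : 1 <= k < s by case/andP: k_range => -> _.
by rewrite inE /closed_nbhd setU11.
Qed.

(* The role of x at its stage k: 2 if x is isolated in S k (one of the m_k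
   isolated vertices), 1 if x is the centre u k, and 0 otherwise, i.e. x is a
   neighbour of u k in G_k (for k = s: a vertex of the final clique other
   than u s).  Role-0 vertices will receive the small labels. *)
Definition role x : nat :=
  if x \in isol e (S (stage x)) then 2 else if x == u (stage x) then 1 else 0.

Lemma role_le2 x : role x <= 2.
Proof. by rewrite /role; case: ifP => //; case: ifP. Qed.

Lemma role2E x : (role x == 2) = (x \in isol e (S (stage x))).
Proof. by rewrite /role; case: ifP => //; case: ifP. Qed.

Lemma role1E x : (role x == 1) = (x \notin isol e (S (stage x))) && (x == u (stage x)).
Proof. by rewrite /role; case: ifP => //; case: ifP. Qed.

Lemma role0E x : (role x == 0) = (x \notin isol e (S (stage x))) && (x != u (stage x)).
Proof. by rewrite /role; case: ifP => //; case: ifP. Qed.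

Lemma adj_role0 x y : e x y -> y \in S (stage x) -> x != u (stage x) -> role x = 0.
Proof.
move=> exy yS x_nu; apply/eqP; rewrite role0E x_nu andbT.
exact: nonisol_not_isol (adj_nonisol (stage_in x) yS exy).
Qed.

Lemma edge_role x y : e x y -> role y != 0 ->
  role x = 0 /\ (stage x < stage y \/ stage x = stage y /\ role y = 1).
Proof.
move=> exy y_role; have eyx : e y x by rewrite e_sym.
have [le_yx | lt_xy] := leqP (stage y) (stage x).
- have xS : x \in S (stage y) by apply: in_earlier_S; rewrite stage_ge1.
  have y_non := adj_nonisol (stage_in y) xS eyx.
  have y_centre : y = u (stage y).
    move: y_role; rewrite /role (negbTE (nonisol_not_isol y_non)).
    by case: (eqVneq y (u (stage y))).
  have eq_xy : stage x = stage y.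
    apply/eqP; rewrite eqn_leq le_yx andbT leqNgt; apply/negP => lt_yx.
    have xS' : x \in S (stage y).+1 by apply: in_earlier_S; rewrite lt_yx.
    have y_early : 1 <= stage y < s by rewrite stage_ge1 (leq_trans lt_yx (stage_le x)).
    by have := centre_no_later_nbr y_early xS'; rewrite -y_centre eyx.
  have y_role1 : role y = 1.
    by apply/eqP; rewrite role1E -y_centre eqxx (nonisol_not_isol y_non).
  split; last by right.
  apply: (adj_role0 exy); first by rewrite eq_xy stage_in.
  by rewrite eq_xy -y_centre; apply/eqP => xy; move: exy; rewrite xy e_irr.
- have yS' : y \in S (stage x).+1 by apply: in_earlier_S; rewrite lt_xy.
  split; last by left.
  have x_early : 1 <= stage x < s by rewrite stage_ge1 (leq_trans lt_xy (stage_le y)).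
  apply: (adj_role0 exy); first by apply: in_earlier_S; rewrite stage_ge1 ltnW.
  by apply/eqP => x_centre; have := centre_no_later_nbr x_early yS'; rewrite -x_centre exy.
Qed.

Definition count r k := #|[set x | (stage x == k) && (role x == r)]|.

Lemma count_stage0 r : count r 0 = 0.
Proof.
apply/eqP; rewrite cards_eq0; apply/eqP/setP => x; rewrite !inE.
by have := stage_ge1 x; case: (stage x).
Qed.

Lemma count_isolated k : 1 <= k <= s -> count 2 k = m_of e (S k).
Proof.
move=> k_range; apply: eq_card => x; rewrite inE role2E.
apply/idP/idP => [/andP[/eqP <- //] | x_isol].
suff -> : stage x = k by rewrite eqxx.
have xS : x \in S k by move: x_isol; rewrite inE => /andP[].
apply: stageE => // lt_ks; apply: contraL x_isol => x_next.
have k_early : 1 <= k < s by case/andP: k_range => -> _.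
exact: nonisol_not_isol (subsetP (next_sub_nonisol k_early) _ x_next).
Qed.

Lemma nbrs_of_centre k : 1 <= k < s ->
  [set x | (stage x == k) && (role x == 0)] = [set w in nonisol e (S k) | e (u k) w].
Proof.
move=> k_early; have [u_non _ next] := step k_early.
have k_range : 1 <= k <= s by case/andP: k_early => -> /ltnW ->.
apply/setP => x; rewrite in_set [in RHS]in_set role0E; apply/idP/idP.
- case/andP => /eqP x_stage; rewrite x_stage => /andP[x_nisol x_nu].
  have xS : x \in S k by rewrite -x_stage stage_in.
  have x_non : x \in nonisol e (S k) by move: x_nisol; rewrite isol_nonisol // negbK.
  have : x \notin S k.+1 by apply/negP => /(stage_max (proj2 (andP k_early))); rewrite x_stage ltnn.
  rewrite next in_setD negb_and negbK /closed_nbhd in_setU1 (negbTE x_nu) /= inE.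
  by case/orP => [/andP[_ ->] | /negP/(_ x_non)]; rewrite ?x_non.
- case/andP => x_non eux; have xS := subsetP (nonisol_sub _ _) _ x_non.
  have -> : stage x = k.
    apply: stageE => // _; rewrite next in_setD negb_and negbK /closed_nbhd in_setU1 inE.
    by rewrite x_non eux orbT.
  rewrite eqxx nonisol_not_isol //=.
  by apply/eqP => xu; move: eux; rewrite -xu e_irr.
Qed.

Lemma clique_rest : [set x | (stage x == s) && (role x == 0)] = nonisol e (S s) :\ u s.
Proof.
apply/setP => x; rewrite !inE role0E; apply/idP/idP.
- case/andP => /eqP x_stage /andP[x_nisol x_nu].
  have xS : x \in S s by rewrite -x_stage stage_in.
  move: x_nisol x_nu; rewrite x_stage isol_nonisol // negbK => x_non ->.
  by move: x_non; rewrite inE.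
- case/and3P => x_nu xS x_deg.
  have x_non : x \in nonisol e (S s) by rewrite inE xS x_deg.
  by rewrite stage_last // eqxx x_nu nonisol_not_isol.
Qed.

Lemma count_nbrs k : 1 <= k <= s -> count 0 k = delta_i e S s k.
Proof.
move=> k_range; rewrite /count /delta_i.
have [lt_ks | ge_ks] := ltnP k s.
  have k_early : 1 <= k < s by case/andP: k_range => -> _.
  rewrite nbrs_of_centre // (ltn_eqF lt_ks).
  by case: (step k_early) => _ <- _.
have -> : k = s by apply/eqP; rewrite eqn_leq ge_ks andbT; case/andP: k_range.
rewrite eqxx clique_rest; case: ifP => [/eqP -> | /negbT non_empty].
  by rewrite set0D cards0.
by rewrite (cardsD1 (u s) (nonisol e (S s))) (last_centre non_empty) add1n subn1.
Qed.

Lemma centres_at k : 1 <= k <= s -> u k \in nonisol e (S k) ->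
  [set x | (stage x == k) && (role x == 1)] = [set u k].
Proof.
move=> k_range u_non; apply/setP => x; rewrite in_set in_set1 role1E; apply/idP/idP.
  by case/andP => /eqP <- /andP[_ ->].
by move=> /eqP ->; rewrite centre_stage // !eqxx nonisol_not_isol.
Qed.

(* Every stage has one centre, except a last stage with no edges left. *)
Lemma count_centre k : 1 <= k <= s ->
  count 1 k + ((k == s) && (nonisol e (S s) == set0)) = 1.
Proof.
move=> k_range; rewrite /count.
have [lt_ks | ge_ks] := ltnP k s.
  have k_early : 1 <= k < s by case/andP: k_range => -> _.
  by rewrite (ltn_eqF lt_ks) addn0 centres_at //; [apply: cards1 | case: (step k_early)].
have -> : k = s by apply/eqP; rewrite eqn_leq ge_ks andbT; case/andP: k_range.
rewrite eqxx /=; have [S_empty | non_empty] := eqVneq (nonisol e (S s)) set0.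
  rewrite addn1; congr _.+1; apply/eqP; rewrite cards_eq0; apply/eqP/setP => x.
  rewrite !inE role1E; apply/negP => /andP[/eqP x_stage /andP[x_nisol _]].
  have xS : x \in S s by rewrite -x_stage stage_in.
  by move: x_nisol; rewrite x_stage isol_nonisol // S_empty inE.
by rewrite addn0 centres_at ?cards1 ?last_centre //; lia.
Qed.

Lemma stage_balance k : 1 <= k <= s ->
  ((count 1 k + count 2 k + ((k == s) && (nonisol e (S s) == set0)))%N%:Z - (count 0 k)%N%:Z
   = y_tilde e S s k)%R.
Proof.
move=> k_range; rewrite /y_tilde -count_isolated // -count_nbrs //.
by have := count_centre k_range; case: (_ && _) => /=; lia.
Qed.

Definition low_below j := \sum_(k < j) count 0 k.
Definition high_below j := \sum_(k < j) (count 1 k + count 2 k).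

Lemma prefix_balance i : 1 <= i <= s ->
  ((high_below i.+1 + ((i == s) && (nonisol e (S s) == set0)))%N%:Z - (low_below i.+1)%:Z
   = y_tilde e S s 1 + z_tilde e S s i)%R.
Proof.
elim: i => [|i IH] // i_range; rewrite /high_below /low_below.
have [-> | i_gt0] := posnP i.
  rewrite !big_ord_recr !big_ord0 /= !count_stage0 /z_tilde big_geq //.
  by have := stage_balance (k := 1) (ltnW s_ge2); rewrite (ltn_eqF s_ge2); lia.
have i_lt : i < s by lia.
have z_step : z_tilde e S s i.+1 = (z_tilde e S s i + y_tilde e S s i.+1)%R.
  by rewrite /z_tilde big_nat_recr.
have := IH ltac:(lia); rewrite (ltn_eqF i_lt) (big_ord_recr i.+1) (big_ord_recr i.+1) /= z_step.
rewrite -/(high_below i.+1) -/(low_below i.+1).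
by have := stage_balance i_range; case: (_ && _) => /=; lia.
Qed.

Hypothesis min_deg_pos : 1 <= min_deg e.
Hypothesis z_nonneg : forall i, 2 <= i <= s -> (0 <= z_tilde e S s i)%R.

(* G has no isolated vertex, so ~y_1 = 1 - delta(G). *)
Lemma first_y : y_tilde e S s 1 = (1 - (min_deg e)%:Z)%R.
Proof.
rewrite /y_tilde /delta_i (ltn_eqF s_ge2) /m_of S1 nonisol_full // isol_full //.
by rewrite cards0 -/(min_deg e); lia.
Qed.

Lemma low_deficit i : 1 <= i <= s ->
  low_below i.+1 + 1 <= min_deg e + high_below i.+1 + ((i == s) && (nonisol e (S s) == set0)).
Proof.
move=> i_range; have := prefix_balance i_range; rewrite first_y.
have : (0 <= z_tilde e S s i)%R.
  have [lt_1i | le_i1] := ltnP 1 i; first by apply: z_nonneg; lia.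
  by rewrite /z_tilde big_geq.
by move: (z_tilde e S s i) => z; case: (_ && _) => /=; lia.
Qed.

(* The numbering: role-0 vertices get the small labels, by increasing stage;
   the other vertices follow by decreasing stage, at each stage the centre
   before the isolated vertices. *)
Definition weight x := if role x == 0 then stage x else s + 2 * (s - stage x) + role x.
Definition label := rank_num weight.

Lemma weight_high y : role y != 0 -> weight y = s + 2 * (s - stage y) + role y.
Proof. by rewrite /weight => /negbTE ->. Qed.

Lemma weight_low y : role y = 0 -> weight y = stage y.
Proof. by rewrite /weight => ->. Qed.

Lemma count_below (P : pred T) i :
  #|[set y | P y && (stage y < i)]| = \sum_(k < i) #|[set y | P y && (stage y == k)]|.
Proof.
elim: i => [|i IH].
  by rewrite big_ord0; apply/eqP; rewrite cards_eq0; apply/eqP/setP => y; rewrite !inE andbF.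
rewrite big_ord_recr /= -IH -cardsUI.
have -> : [set y | P y && (stage y < i)] :&: [set y | P y && (stage y == i)] = set0.
  apply/setP => y; rewrite !inE; case: (P y) => //=; apply/negP => /andP[lt_i /eqP eq_i].
  by rewrite eq_i ltnn in lt_i.
rewrite cards0 addn0; apply: eq_card => y; rewrite !inE ltnS leq_eqVlt.
by case: (P y) => //=; rewrite orbC.
Qed.

Lemma card_low_below i : #|[set y | (role y == 0) && (stage y < i)]| = low_below i.
Proof. by rewrite count_below; apply: eq_bigr => k _; apply: eq_card => y; rewrite !inE andbC. Qed.

Lemma card_high_below i : #|[set y | (role y != 0) && (stage y < i)]| = high_below i.
Proof.
rewrite count_below; apply: eq_bigr => k _; rewrite /count -cardsUI.
have -> : [set x | (stage x == k) && (role x == 1)] :&: [set x | (stage x == k) && (role x == 2)]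
    = set0.
  by apply/setP => y; rewrite !inE; apply/negP => /andP[/andP[_ /eqP ->] /andP[]].
rewrite cards0 addn0; apply: eq_card => y; rewrite !inE.
by have := role_le2 y; case: (role y) => [|[|[|]]] //= _; rewrite ?andbF ?andbT ?orbF.
Qed.

Lemma low_below_mono i j : i <= j -> low_below i <= low_below j.
Proof.
move=> le_ij; rewrite -!card_low_below; apply/subset_leq_card/subsetP => y.
by rewrite !inE => /andP[-> /leq_trans ->].
Qed.

Lemma card_low_high : #|T| = low_below s.+1 + high_below s.+1.
Proof.
rewrite -card_low_below -card_high_below -cardsUI.
have -> : [set y | (role y == 0) && (stage y < s.+1)] :&:
          [set y | (role y != 0) && (stage y < s.+1)] = set0.
  by apply/setP => y; rewrite !inE; case: (role y == 0); rewrite ?andbF.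
rewrite cards0 addn0 -cardsT; apply: eq_card => y; rewrite !inE ltnS stage_le.
by case: (role y == 0).
Qed.

Lemma label_low x : role x = 0 -> label x <= low_below (stage x).+1.
Proof.
move=> x_low; apply: leq_trans (rank_num_le _ x) _; rewrite -card_low_below.
apply/subset_leq_card/subsetP => y; rewrite !inE (weight_low x_low) ltnS.
have [y_low | y_high] := eqVneq (role y) 0; first by rewrite (weight_low y_low).
by rewrite (weight_high y_high); have := stage_le x; lia.
Qed.

Lemma label_high x : role x != 0 ->
  label x + high_below (stage x) + (role x == 1) * count 2 (stage x) <= #|T|.
Proof.
move=> x_high; have := role_le2 x; have := stage_le x => x_le x_role.
set earlier := [set y | (role y != 0) && (stage y < stage x)].
set isolated := [set y | (role x == 1) && (stage y == stage x) && (role y == 2)].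
have heavy : earlier :|: isolated \subset [set y | weight x < weight y].
  apply/subsetP => y; rewrite !inE (weight_high x_high).
  case/orP => [/andP[y_high y_early] | /andP[/andP[/eqP x_c /eqP y_stage] /eqP y_isol]].
    by rewrite (weight_high y_high); have := role_le2 y; lia.
  by rewrite (weight_high (y := y)) ?y_isol // x_c y_stage; lia.
have card_union : #|earlier :|: isolated| = #|earlier| + #|isolated|.
  rewrite -cardsUI; suff -> : earlier :&: isolated = set0 by rewrite cards0 addn0.
  apply/setP => y; rewrite !inE; apply/negP.
  by case/andP => /andP[_ lt_y] /andP[/andP[_ /eqP eq_y] _]; rewrite eq_y ltnn in lt_y.
have := rank_num_above heavy; rewrite card_union card_high_below.
rewrite -addnA; apply: leq_trans; rewrite !leq_add2l.
have [x_c | _] := eqVneq (role x) 1; last by rewrite mul0n.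
by rewrite mul1n; apply/subset_leq_card/subsetP => y; rewrite !inE x_c.
Qed.

(* An edge at a vertex y of nonzero role: its other end x has role 0, and the
   deficit inequality at the stage before (or at) that of y bounds the sum. *)
Lemma edge_label_high x y : e x y -> role y != 0 -> label x + label y <= #|T| + min_deg e.
Proof.
move=> exy y_high; have [x_low x_before_y] := edge_role exy y_high.
have lx := label_low x_low; have ly := label_high y_high.
set p := #|T| in ly *.
have := stage_ge1 y; have := stage_le y => y_le y_ge1.
case: x_before_y => [lt_xy | [eq_xy y_c]].
- have := low_deficit (i := (stage y).-1) ltac:(have := stage_ge1 x; lia).
  have -> : ((stage y).-1 == s) = false by apply/eqP; lia.
  rewrite prednK //=.
  by have := low_below_mono lt_xy; move: ly; move: (_ * _) => w; lia.
- have stage_range : 1 <= stage y <= s by rewrite y_ge1.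
  have := low_deficit stage_range; rewrite /high_below big_ord_recr -/(high_below (stage y)) /=.
  have := count_centre stage_range; rewrite eq_xy in lx.
  by move: ly; rewrite y_c /=; case: (_ && _) => /=; lia.
Qed.

Lemma edge_label x y : e x y -> label x + label y <= #|T| + min_deg e.
Proof.
move=> exy; have [y_low | y_high] := eqVneq (role y) 0; last exact: edge_label_high.
have [x_low | x_high] := eqVneq (role x) 0; last by rewrite addnC edge_label_high // e_sym.
have := label_low x_low; have := label_low y_low.
have := low_below_mono (stage_le x : (stage x).+1 <= s.+1).
have := low_below_mono (stage_le y : (stage y).+1 <= s.+1).
have := low_deficit (i := s) ltac:(lia); have := card_low_high.
by case: (_ && _) => /=; lia.
Qed.

Lemma str_label : str_f e label <= #|T| + min_deg e.
Proof. by apply/bigmax_leqP => x _; apply/bigmax_leqP => y; apply: edge_label. Qed.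

End DeltaSequence.

Unset Implicit Arguments.

Theorem mainTheorem2 (T : finType) (e : rel T) :
  symmetric e -> irreflexive e ->
  1 <= min_deg e -> min_deg e <= #|T| - 2 ->
  (exists (Gs : nat -> {set T}) (s : nat),
      delta_seq e Gs s /\
      (forall i, 2 <= i <= s -> (0 <= z_tilde e Gs s i)%R)) ->
  is_strength e (#|T| + min_deg e).
Proof.
move=> e_sym e_irr d_pos _ [Gs [s [dseq z_nonneg]]].
have [x0 _] := card_gt0P (card_gt0_min_deg d_pos).
have [s_ge2 S1 _ _] := dseq.
pose lab := label e s Gs (centre e Gs s x0).
have lab_num : numbering lab by apply: rank_num_numbering.
split=> [|f f_num]; last exact: strength_lower_bound.
exists lab; split => //; apply/eqP; rewrite eqn_leq strength_lower_bound // andbT.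
exact: str_label e_sym e_irr s_ge2 S1 (centre_step x0 dseq) (@centre_last _ e Gs s x0)
  d_pos z_nonneg.
Qed.
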